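(* Let $a\in\mathbb{R}$, $b\in(a,\infty)$, $f\in C^1([a,b],\mathbb{R})$, $p\in C([a,b],\mathbb{R})$ satisfy for all $x\in[a,b]$ that $f'(x)>0\le p(x)$ and $\int_a^b|p(y)|\,\mathrm{d}y>0$, assume that $f$ is strictly convex, let $g\colon[a,b]\to\mathbb{R}$ be affine linear, assume $\int_a^b(f(x)-g(x))p(x)\,\mathrm{d}x=0$, and let $\lambda=\max\{|f(x)-g(x)|\colon x\in\{a,b\},\ g(x)<f(x)\}$ (under these hypotheses this set is nonempty). Then $$\int_a^b(f(x)-g(x))^2p(x)\,\mathrm{d}x\le\lambda\Big[\lambda+\sup_{x\in[a,b]}f'(x)\Big]\Big[\sup_{x\in[a,b]}p(x)\Big](b-a).$$ *)

From Stdlib Require Import Reals.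
From Coquelicot Require Import Coquelicot.
Open Scope R_scope.

Definition cont_on (h : R -> R) (a b : R) : Prop :=
  forall x, a <= x <= b -> forall eps, 0 < eps -> exists delta, 0 < delta /\
    forall y, a <= y <= b -> Rabs (y - x) < delta -> Rabs (h y - h x) < eps.

Definition deriv_on (f df : R -> R) (a b : R) : Prop :=
  forall x, a <= x <= b -> forall eps, 0 < eps -> exists delta, 0 < delta /\
    forall y, a <= y <= b -> Rabs (y - x) < delta ->
      Rabs (f y - f x - df x * (y - x)) <= eps * Rabs (y - x).

Definition C1_on (f df : R -> R) (a b : R) : Prop :=
  deriv_on f df a b /\ cont_on df a b.

Definition strictly_convex_on (f : R -> R) (a b : R) : Prop :=
  forall x y t, a <= x <= b -> a <= y <= b -> x <> y -> 0 < t < 1 ->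
    f (t * x + (1 - t) * y) < t * f x + (1 - t) * f y.

Definition affine_on (g : R -> R) (a b : R) : Prop :=
  exists c d, forall x, a <= x <= b -> g x = c * x + d.

(* sup_{x in [a,b]} h x (as a real number; finite for continuous h). *)
Definition sup_on (h : R -> R) (a b : R) : R :=
  real (Lub_Rbar (fun y => exists x, a <= x <= b /\ y = h x)).

(* lambda = max { |f x - g x| : x in {a,b}, g x < f x }.
   The last branch (empty set) cannot occur under the hypotheses. *)
Definition lam (f g : R -> R) (a b : R) : R :=
  match Rlt_dec (g a) (f a), Rlt_dec (g b) (f b) with
  | left _, left _ => Rmax (Rabs (f a - g a)) (Rabs (f b - g b))
  | left _, right _ => Rabs (f a - g a)
  | right _, left _ => Rabs (f b - g b)
  | right _, right _ => 0
  end.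

(* Put h = f - g, which is convex, and λ = max (0, h a, h b): this is the λ of the statement,
   and it bounds h on [a, b]. If min h = -M < 0, orthogonality gives ∫ h² p = ∫ h (h + M) p,
   whose integrand is ≤ 0 where h ≤ 0 and ≤ λ (λ + M) sup p elsewhere. By convexity h ≤ 0 on
   the stretch of relative length r = M / (λ + M) from the minimiser towards either endpoint, so
   {h > 0} has length at most (1 - r)(b - a) = λ / (λ + M) (b - a). Hence
   ∫ h² p ≤ λ² sup p (b - a), which is stronger than the claim because sup f' > 0. *)

From Stdlib Require Import Reals Lra Psatz.
From Coquelicot Require Import Coquelicot.
Open Scope R_scope.

Definition clamp (a b x : R) : R := Rmax a (Rmin b x).

Lemma clamp_in a b x : a <= b -> a <= clamp a b x <= b.
Proof. intros; unfold clamp, Rmax, Rmin; repeat destruct Rle_dec; lra. Qed.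

Lemma clamp_id a b x : a <= x <= b -> clamp a b x = x.
Proof. intros; unfold clamp, Rmax, Rmin; repeat destruct Rle_dec; lra. Qed.

Lemma clamp_lipschitz a b x y : a <= b -> Rabs (clamp a b y - clamp a b x) <= Rabs (y - x).
Proof.
  intros; unfold clamp, Rmax, Rmin; repeat destruct Rle_dec;
    unfold Rabs; repeat destruct Rcase_abs; lra.
Qed.

Lemma cont_on_iff_continuous_clamp k a b : a <= b ->
  cont_on k a b <-> forall x, continuous (fun y => k (clamp a b y)) x.
Proof.
  intros hab; split.
  - intros hk x. apply continuity_pt_filterlim. intros eps he.
    destruct (hk (clamp a b x) (clamp_in a b x hab) eps he) as [d [hd H]].
    exists d; split; [exact hd|]. intros y [_ hy].
    apply H; [now apply clamp_in|].
    eapply Rle_lt_trans; [now apply clamp_lipschitz | exact hy].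
  - intros hk x hx eps he.
    destruct (proj2 (continuity_pt_filterlim _ x) (hk x) eps he) as [d [hd H]].
    exists d; split; [exact hd|]. intros y hy hyx.
    destruct (Req_dec x y) as [<-|hxy]; [now rewrite Rminus_eq_0, Rabs_R0|].
    specialize (H y (conj (conj I hxy) hyx)). simpl in H; unfold R_dist in H.
    now rewrite !clamp_id in H.
Qed.

Lemma deriv_on_cont_on f df a b : deriv_on f df a b -> cont_on f a b.
Proof.
  intros hd x hx eps he.
  destruct (hd x hx 1 Rlt_0_1) as [d [hdp H]].
  set (K := Rabs (df x) + 1).
  assert (hK : 0 < K) by (unfold K; pose proof (Rabs_pos (df x)); lra).
  exists (Rmin d (eps / K)); split.
  { apply Rmin_pos; [exact hdp | now apply Rdiv_lt_0_compat]. }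
  intros y hy hyx.
  assert (hyd : Rabs (y - x) < d) by (eapply Rlt_le_trans; [exact hyx | apply Rmin_l]).
  assert (hye : K * Rabs (y - x) < eps).
  { apply Rlt_le_trans with (K * (eps / K)); [|right; field; lra].
    apply Rmult_lt_compat_l; [exact hK|].
    eapply Rlt_le_trans; [exact hyx | apply Rmin_r]. }
  specialize (H y hy hyd).
  replace (f y - f x) with ((f y - f x - df x * (y - x)) + df x * (y - x)) by ring.
  eapply Rle_lt_trans; [apply Rabs_triang|]. rewrite Rabs_mult. unfold K in *. lra.
Qed.

Lemma affine_on_cont_on g a b : affine_on g a b -> cont_on g a b.
Proof.
  intros [c [d hg]] x hx eps he.
  pose proof (Rabs_pos c) as hc.
  exists (eps / (Rabs c + 1)); split; [apply Rdiv_lt_0_compat; lra|].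
  intros y hy hyx. rewrite (hg y hy), (hg x hx).
  replace (c * y + d - (c * x + d)) with (c * (y - x)) by ring.
  rewrite Rabs_mult.
  apply (Rmult_lt_compat_l (Rabs c + 1)) in hyx; [|lra].
  replace ((Rabs c + 1) * (eps / (Rabs c + 1))) with eps in hyx by (field; lra).
  pose proof (Rabs_pos (y - x)). nra.
Qed.

Section ContinuousOnSegment.

Variables a b : R.
Hypothesis hab : a <= b.

Lemma cont_on_mult u v :
  cont_on u a b -> cont_on v a b -> cont_on (fun x => u x * v x) a b.
Proof.
  rewrite !cont_on_iff_continuous_clamp by exact hab. intros hu hv x.
  now apply (continuous_mult (fun y => u (clamp a b y)) (fun y => v (clamp a b y))).
Qed.

Lemma cont_on_minus u v :
  cont_on u a b -> cont_on v a b -> cont_on (fun x => u x - v x) a b.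
Proof.
  rewrite !cont_on_iff_continuous_clamp by exact hab. intros hu hv x.
  now apply (@continuous_minus R_UniformSpace R_AbsRing R_NormedModule
    (fun y => u (clamp a b y)) (fun y => v (clamp a b y))).
Qed.

Lemma ex_RInt_cont_on k : cont_on k a b -> ex_RInt k a b.
Proof.
  rewrite cont_on_iff_continuous_clamp by exact hab. intros hk.
  apply (ex_RInt_ext (fun y => k (clamp a b y))).
  - intros x hx. rewrite Rmin_left, Rmax_right in hx by lra. now rewrite clamp_id by lra.
  - apply (@ex_RInt_continuous R_CompleteNormedModule). intros; apply hk.
Qed.

Lemma cont_on_continuity_pt_clamp k : cont_on k a b ->
  forall x, a <= x <= b -> continuity_pt (fun y => k (clamp a b y)) x.
Proof.
  rewrite cont_on_iff_continuous_clamp by exact hab.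
  intros hk x _. apply continuity_pt_filterlim, hk.
Qed.

Lemma cont_on_attains_max k : cont_on k a b ->
  exists m, a <= m <= b /\ forall x, a <= x <= b -> k x <= k m.
Proof.
  intros hk.
  destruct (continuity_ab_maj _ a b hab (cont_on_continuity_pt_clamp k hk)) as [m [Hm hm]].
  exists m; split; [exact hm|]. intros x hx.
  specialize (Hm x hx). now rewrite !clamp_id in Hm.
Qed.

Lemma cont_on_attains_min k : cont_on k a b ->
  exists m, a <= m <= b /\ forall x, a <= x <= b -> k m <= k x.
Proof.
  intros hk.
  destruct (continuity_ab_min _ a b hab (cont_on_continuity_pt_clamp k hk)) as [m [Hm hm]].
  exists m; split; [exact hm|]. intros x hx.
  specialize (Hm x hx). now rewrite !clamp_id in Hm.
Qed.

End ContinuousOnSegment.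

Lemma sup_on_max k a b m : a <= m <= b -> (forall x, a <= x <= b -> k x <= k m) ->
  sup_on k a b = k m.
Proof.
  intros hm hk. unfold sup_on.
  rewrite (is_lub_Rbar_unique _ (Finite (k m))); [reflexivity|]. split.
  - intros y [x [hx ->]]. now apply hk.
  - intros l hl. apply hl. now exists m.
Qed.

Definition convex_on (h : R -> R) (a b : R) : Prop :=
  forall x y t, a <= x <= b -> a <= y <= b -> 0 <= t <= 1 ->
    h (t * x + (1 - t) * y) <= t * h x + (1 - t) * h y.

Lemma strictly_convex_on_convex f a b : strictly_convex_on f a b -> convex_on f a b.
Proof.
  intros hf x y t hx hy ht.
  destruct (Req_dec x y) as [<-|hxy].
  { replace (t * x + (1 - t) * x) with x by ring. lra. }
  destruct (Req_dec t 0) as [->|ht0].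
  { replace (0 * x + (1 - 0) * y) with y by ring. lra. }
  destruct (Req_dec t 1) as [->|ht1].
  { replace (1 * x + (1 - 1) * y) with x by ring. lra. }
  apply Rlt_le, hf; auto; lra.
Qed.

Lemma convex_on_minus_affine f g a b :
  convex_on f a b -> affine_on g a b -> convex_on (fun x => f x - g x) a b.
Proof.
  intros hf [c [d hg]] x y t hx hy ht.
  assert (hxy : a <= t * x + (1 - t) * y <= b) by nra.
  rewrite (hg _ hxy), (hg _ hx), (hg _ hy).
  pose proof (hf x y t hx hy ht). nra.
Qed.

Lemma convex_on_le_Rmax h a b x : convex_on h a b -> a <= x <= b ->
  h x <= Rmax (h a) (h b).
Proof.
  intros hh hx.
  destruct (Req_dec a b) as [<-|hab].
  { replace x with a by lra. apply Rmax_l. }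
  set (t := (b - x) / (b - a)).
  assert (ht : 0 <= t <= 1).
  { unfold t; split; [apply Rdiv_le_0_compat; lra|].
    apply Rmult_le_reg_r with (b - a); [lra|]. field_simplify; lra. }
  assert (hxt : x = t * a + (1 - t) * b) by (unfold t; field; lra).
  pose proof (hh a b t ltac:(lra) ltac:(lra) ht) as H. rewrite <- hxt in H.
  pose proof (Rmax_l (h a) (h b)); pose proof (Rmax_r (h a) (h b)). nra.
Qed.

Section ConvexNonposNearMin.

Variables (h : R -> R) (a b x0 L M r : R).
Hypotheses (hh : convex_on h a b) (hx0 : a <= x0 <= b)
  (hmin : h x0 <= - M) (ha : h a <= L) (hb : h b <= L)
  (hLM : 0 <= L + M) (hr : 0 <= r <= 1) (hrLM : r * (L + M) <= M).

Lemma convex_on_nonpos_toward e t : a <= e <= b -> h e <= L -> 0 <= t <= r ->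
  h (x0 + t * (e - x0)) <= 0.
Proof.
  intros he heL ht.
  replace (x0 + t * (e - x0)) with (t * e + (1 - t) * x0) by ring.
  pose proof (hh e x0 t he hx0 ltac:(lra)). nra.
Qed.

Lemma convex_on_nonpos_near_min x :
  x0 - r * (x0 - a) <= x <= x0 + r * (b - x0) -> h x <= 0.
Proof.
  intros hx.
  destruct (Rle_dec x0 x) as [hle|hlt].
  - destruct (Req_dec x0 b) as [<-|hb'].
    { replace x with x0 by lra. nra. }
    replace x with (x0 + (x - x0) / (b - x0) * (b - x0)) by (field; lra).
    apply convex_on_nonpos_toward; [lra | exact hb |].
    split; [apply Rdiv_le_0_compat; lra|].
    apply Rmult_le_reg_r with (b - x0); [lra|]. field_simplify; lra.
  - destruct (Req_dec x0 a) as [<-|ha'].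
    { replace x with x0 by lra. nra. }
    replace x with (x0 + (x0 - x) / (x0 - a) * (a - x0)) by (field; lra).
    apply convex_on_nonpos_toward; [lra | exact ha |].
    split; [apply Rdiv_le_0_compat; lra|].
    apply Rmult_le_reg_r with (x0 - a); [lra|]. field_simplify; lra.
Qed.

End ConvexNonposNearMin.

Lemma RInt_le_const (F : R -> R) u v C : u <= v -> ex_RInt F u v ->
  (forall x, u < x < v -> F x <= C) -> RInt F u v <= C * (v - u).
Proof.
  intros huv hF hC.
  apply Rle_trans with (RInt (fun _ => C) u v).
  - apply RInt_le; [exact huv | exact hF | apply ex_RInt_const | exact hC].
  - rewrite RInt_const. right. unfold scal; simpl; unfold mult; simpl. ring.
Qed.

Lemma RInt_le_outside (F : R -> R) u c1 c2 v C :
  u <= c1 <= c2 -> c2 <= v -> ex_RInt F u v ->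
  (forall x, u < x < v -> F x <= C) -> (forall x, c1 < x < c2 -> F x <= 0) ->
  RInt F u v <= C * ((c1 - u) + (v - c2)).
Proof.
  intros hc hv hF hC h0.
  assert (hF1 : ex_RInt F u c1)
    by (apply (ex_RInt_Chasles_1 (V := R_CompleteNormedModule)) with v; [lra | exact hF]).
  assert (hF2 : ex_RInt F c1 v)
    by (apply (ex_RInt_Chasles_2 (V := R_CompleteNormedModule)) with u; [lra | exact hF]).
  assert (hF3 : ex_RInt F c1 c2)
    by (apply (ex_RInt_Chasles_1 (V := R_CompleteNormedModule)) with v; [lra | exact hF2]).
  assert (hF4 : ex_RInt F c2 v)
    by (apply (ex_RInt_Chasles_2 (V := R_CompleteNormedModule)) with c1; [lra | exact hF2]).
  rewrite <- (RInt_Chasles (V := R_CompleteNormedModule) F u c1 v hF1 hF2),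
    <- (RInt_Chasles F c1 c2 v hF3 hF4).
  pose proof (RInt_le_const F u c1 C ltac:(lra) hF1 ltac:(intros; apply hC; lra)).
  pose proof (RInt_le_const F c1 c2 0 ltac:(lra) hF3 h0).
  pose proof (RInt_le_const F c2 v C ltac:(lra) hF4 ltac:(intros; apply hC; lra)).
  unfold plus; simpl. lra.
Qed.

Lemma is_RInt_sqr_shift (h p : R -> R) a b M :
  ex_RInt (fun x => h x ^ 2 * p x) a b -> is_RInt (fun x => h x * p x) a b 0 ->
  is_RInt (fun x => h x * (h x + M) * p x) a b (RInt (fun x => h x ^ 2 * p x) a b).
Proof.
  intros hsq horth.
  apply is_RInt_ext with (fun x => plus (h x ^ 2 * p x) (scal M (h x * p x))).
  { intros x _. unfold plus, scal; simpl; unfold mult; simpl. ring. }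
  pose proof (is_RInt_plus _ _ a b _ _ (RInt_correct _ _ _ hsq)
    (is_RInt_scal _ a b M _ horth)) as H.
  now rewrite Rmult_0_r, Rplus_0_r in H.
Qed.

Lemma shifted_sqr_weight_nonpos y q M : - M <= y <= 0 -> 0 <= q ->
  y * (y + M) * q <= 0.
Proof. intros hy hq. assert (y * (y + M) <= 0) by nra. nra. Qed.

Lemma shifted_sqr_weight_le y q L M P : 0 <= L -> - M <= y <= L -> 0 <= q <= P ->
  y * (y + M) * q <= L * (L + M) * P.
Proof.
  intros hL hy hq.
  assert (hLM : 0 <= L * (L + M)) by nra.
  destruct (Rle_dec y 0) as [hy0|hy0].
  - pose proof (shifted_sqr_weight_nonpos y q M ltac:(lra) ltac:(lra)).
    assert (0 <= L * (L + M) * P) by (apply Rmult_le_pos; lra). lra.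
  - apply Rmult_le_compat; [nra | lra | nra | lra].
Qed.

Section ConvexWeightedSqrBound.

Variables (a b : R) (h p : R -> R) (P : R).
Hypotheses (hab : a <= b) (hh : cont_on h a b) (hp : cont_on p a b)
  (hconv : convex_on h a b)
  (hp0 : forall x, a <= x <= b -> 0 <= p x) (hpP : forall x, a <= x <= b -> p x <= P)
  (horth : RInt (fun x => h x * p x) a b = 0).

Lemma ex_RInt_sqr_weight : ex_RInt (fun x => h x ^ 2 * p x) a b.
Proof.
  apply (ex_RInt_ext (fun x => h x * h x * p x)); [intros x _; simpl; ring|].
  apply (ex_RInt_cont_on a b hab), (cont_on_mult a b hab); [|exact hp].
  now apply cont_on_mult.
Qed.

Lemma RInt_sqr_weight_le_neg_min x0 L : a <= x0 <= b ->
  (forall x, a <= x <= b -> h x0 <= h x <= L) -> h x0 < 0 -> 0 <= L ->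
  RInt (fun x => h x ^ 2 * p x) a b <= L ^ 2 * P * (b - a).
Proof.
  intros hx0 hbnd hneg hL.
  set (M := - h x0).
  assert (hM : 0 < M) by (unfold M; lra).
  assert (hhp : ex_RInt (fun x => h x * p x) a b)
    by (now apply (ex_RInt_cont_on a b hab), cont_on_mult).
  assert (hshift := is_RInt_sqr_shift h p a b M ex_RInt_sqr_weight
    ltac:(rewrite <- horth; exact (RInt_correct _ _ _ hhp))).
  rewrite <- (is_RInt_unique _ _ _ _ hshift).
  (* The chord from height -M at x0 to height L at an endpoint vanishes at relative distance r. *)
  set (r := M / (L + M)).
  assert (hr : r * (L + M) = M) by (unfold r; field; lra).
  assert (hr01 : 0 <= r <= 1) by (split; [unfold r; apply Rdiv_le_0_compat | nra]; lra).
  assert (hP0 : 0 <= P) by (apply Rle_trans with (p a); [apply hp0 | apply hpP]; lra).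
  apply Rle_trans with
    (L * (L + M) * P * ((x0 - r * (x0 - a) - a) + (b - (x0 + r * (b - x0))))).
  - apply RInt_le_outside; [split; nra | nra | eexists; exact hshift | |].
    + intros x hx.
      pose proof (hbnd x ltac:(lra)); pose proof (hp0 x ltac:(lra)); pose proof (hpP x ltac:(lra)).
      apply shifted_sqr_weight_le; unfold M; lra.
    + intros x hx. assert (hx' : a <= x <= b) by nra.
      pose proof (hbnd x hx'); pose proof (hp0 x hx').
      assert (h x <= 0).
      { apply (convex_on_nonpos_near_min h a b x0 L M r hconv hx0);
          [unfold M | apply hbnd | apply hbnd | | | |]; lra. }
      apply shifted_sqr_weight_nonpos; unfold M; lra.
  - right. unfold r. field. lra.
Qed.

Lemma RInt_sqr_weight_le_convex :
  RInt (fun x => h x ^ 2 * p x) a b <= Rmax 0 (Rmax (h a) (h b)) ^ 2 * P * (b - a).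
Proof.
  set (L := Rmax 0 (Rmax (h a) (h b))).
  assert (hL : 0 <= L) by apply Rmax_l.
  assert (hhL : forall x, a <= x <= b -> h x <= L).
  { intros x hx. apply Rle_trans with (Rmax (h a) (h b));
      [now apply convex_on_le_Rmax | apply Rmax_r]. }
  destruct (cont_on_attains_min a b hab h hh) as [x0 [hx0 hmin]].
  destruct (Rlt_dec (h x0) 0) as [hneg|hnneg].
  - apply (RInt_sqr_weight_le_neg_min x0 L hx0); [|exact hneg | exact hL].
    intros x hx; split; [apply hmin | apply hhL]; exact hx.
  - apply RInt_le_const; [exact hab | |].
    + exact ex_RInt_sqr_weight.
    + intros x hx. assert (hx' : a <= x <= b) by lra.
      pose proof (hmin x hx'); pose proof (hhL x hx').
      apply Rmult_le_compat; [| apply hp0, hx' | apply pow_incr | apply hpP, hx']; nra.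
Qed.

End ConvexWeightedSqrBound.

Lemma lam_eq_Rmax f g a b : lam f g a b = Rmax 0 (Rmax (f a - g a) (f b - g b)).
Proof.
  unfold lam; destruct Rlt_dec; destruct Rlt_dec;
    unfold Rmax, Rabs; repeat destruct Rle_dec; repeat destruct Rcase_abs; lra.
Qed.

Theorem lemma3p6 (a b : R) (f df p g : R -> R)
  (hab : a < b)
  (hf : C1_on f df a b)
  (hp : cont_on p a b)
  (hdf : forall x, a <= x <= b -> 0 < df x)
  (hp0 : forall x, a <= x <= b -> 0 <= p x)
  (hpint : 0 < RInt (fun y => Rabs (p y)) a b)
  (hconv : strictly_convex_on f a b)
  (hg : affine_on g a b)
  (horth : RInt (fun x => (f x - g x) * p x) a b = 0) :
  RInt (fun x => (f x - g x) ^ 2 * p x) a b <=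
    lam f g a b * (lam f g a b + sup_on df a b) * sup_on p a b * (b - a).
Proof.
  destruct hf as [hfd hdfc].
  assert (hab' : a <= b) by lra.
  destruct (cont_on_attains_max a b hab' p hp) as [xp [hxp hpmax]].
  destruct (cont_on_attains_max a b hab' df hdfc) as [xd [hxd hdfmax]].
  rewrite (sup_on_max p a b xp hxp hpmax), (sup_on_max df a b xd hxd hdfmax).
  pose proof (RInt_sqr_weight_le_convex a b (fun x => f x - g x) p (p xp) hab'
    (cont_on_minus a b hab' f g (deriv_on_cont_on f df a b hfd) (affine_on_cont_on g a b hg))
    hp (convex_on_minus_affine f g a b (strictly_convex_on_convex f a b hconv) hg)
    hp0 hpmax horth) as hbound.
  cbv beta in hbound; rewrite <- lam_eq_Rmax in hbound.
  assert (hlam : 0 <= lam f g a b) by (rewrite lam_eq_Rmax; apply Rmax_l).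
  pose proof (hdf xd hxd); pose proof (hp0 xp hxp).
  eapply Rle_trans; [exact hbound|].
  apply Rmult_le_compat_r; [lra|]. apply Rmult_le_compat_r; [lra|]. nra.
Qed.
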